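(* Let $\mathcal{V}$ be a set of $n\ge 2$ vertices, let $\mathcal{C}$ be a fixed partition of $\mathcal{V}$ into communities, and let $Q_a(\mathcal{C})$ denote, for an attributed graph $G$ on vertex set $\mathcal{V}$, the modularity of $\mathcal{C}$ in the auxiliary graph $G_a$ of $G$ (defined in the context). Then every attributed graph $G$ on $\mathcal{V}$ satisfies $$LS_{Q_a(\mathcal{C})}(G)=\max_{G'\sim_{at}G}\bigl|Q_a(\mathcal{C})(G)-Q_a(\mathcal{C})(G')\bigr|\le \frac{60}{n}.$$
   Context: An attributed graph is a triple $G=(\mathcal{V},\mathcal{E},X)$ with $\mathcal{V}=\{v_1,\dots,v_n\}$, $\mathcal{E}$ a set of undirected edges, and $X$ a binary $n\times k$ matrix whose $i$-th row $\tau(v_i)\in\{0,1\}^k$ is the attribute vector of $v_i$. Two attributed graphs $G=(\mathcal{V},\mathcal{E},X)$ and $G'=(\mathcal{V},\mathcal{E}',X')$ on the same vertex set are neighbouring, $G\sim_{at}G'$, iff either $|\mathcal{E}\,\triangle\,\mathcal{E}'|=1$ (and the attributes coincide), or they have the same edges and differ in the attribute vector of exactly one vertex. For a graph $H$ with $m\ge1$ edges and a partition $\mathcal{C}$ of its vertices, the modularity is $\sum_{C\in\mathcal{C}}\bigl(\frac{\ell_C}{m}-(\frac{d_C}{2m})^2\bigr)$, where $\ell_C$ is the number of edges with both ends in $C$ and $d_C$ the sum of degrees of the vertices of $C$. The auxiliary graph $G_a$ of an attributed graph $G$ has vertex set $\mathcal{V}$ and its edges are the $\lceil n(n-1)/20\rceil$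 pairs of distinct vertices whose attribute vectors have the largest cosine similarity (ties broken by a fixed rule). The local sensitivity $LS_q(G)$ of a real-valued query $q$ at $G$ is $\max_{G'\sim_{at}G}|q(G)-q(G')|$. *)

From HB Require Import structures.
From mathcomp Require Import all_boot all_order all_algebra.
Set Implicit Arguments. Unset Strict Implicit. Unset Printing Implicit Defensive.
Import Order.TTheory GRing.Theory Num.Theory.
Local Open Scope ring_scope.

(* Vertex set V = 'I_n.  An attribute vector is a {ffun 'I_k -> bool}.
   An attributed graph is a pair (edge set, attribute map); an undirected
   edge is a 2-element subset of 'I_n. *)
Definition attr_vec (k : nat) := {ffun 'I_k -> bool}.
Definition attr_graph (n k : nat) :=
  ({set {set 'I_n}} * {ffun 'I_n -> attr_vec k})%type.

Definition ag_edges n k (G : attr_graph n k) : {set {set 'I_n}} := G.1.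
Definition ag_attr n k (G : attr_graph n k) : {ffun 'I_n -> attr_vec k} := G.2.

Definition all_pairs (n : nat) : {set {set 'I_n}} := [set e : {set 'I_n} | #|e| == 2%N].

Definition simple_edges n (E : {set {set 'I_n}}) : bool := E \subset all_pairs n.
Definition wf_ag n k (G : attr_graph n k) : bool := simple_edges (ag_edges G).

Definition sym_diff (T : finType) (A B : {set T}) : {set T} := (A :\: B) :|: (B :\: A).
Definition nbr_at n k (G G' : attr_graph n k) : bool :=
  ((#|sym_diff (ag_edges G) (ag_edges G')| == 1%N) && (ag_attr G == ag_attr G'))
  || ((ag_edges G == ag_edges G')
      && (#|[set v | ag_attr G v != ag_attr G' v]| == 1%N)).

Definition degree n (E : {set {set 'I_n}}) (v : 'I_n) : nat :=
  #|[set e in E | v \in e]|.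
Definition modularity (R : realFieldType) n (E : {set {set 'I_n}})
    (P : {set {set 'I_n}}) : R :=
  let m : R := (#|E|)%:R in
  \sum_(C in P)
     ( (#|[set e in E | e \subset C]|)%:R / m
       - ((\sum_(v in C) degree E v)%:R / (2 * m)) ^+ 2 ).

(* cosine similarity of binary vectors: <a,b> / (||a|| ||b||);
   convention: 0 if one vector is zero (MathComp's x / 0 = 0). *)
Definition ones k (a : attr_vec k) : nat := #|[set i | a i]|.
Definition dotb k (a b : attr_vec k) : nat := #|[set i | a i && b i]|.
Definition cos_sim (R : rcfType) k (a b : attr_vec k) : R :=
  (dotb a b)%:R / (Num.sqrt (ones a)%:R * Num.sqrt (ones b)%:R).

Definition pair_sim (R : rcfType) n k (X : {ffun 'I_n -> attr_vec k})
    (e : {set 'I_n}) : R :=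
  match enum e with
  | [:: u; v] => cos_sim R (X u) (X v)
  | _ => 0
  end.

(* number of auxiliary edges: ceil(n(n-1)/20) *)
Definition n_aux (n : nat) : nat := ((n * (n - 1) + 19) %/ 20)%N.

(* Auxiliary graph G_a: the n_aux n pairs of largest cosine similarity, ties
   broken by a fixed rule given by an injective ranking [tb] of the pairs
   (smaller rank wins ties). *)
Definition beats (R : rcfType) n k (tb : {set 'I_n} -> nat)
    (X : {ffun 'I_n -> attr_vec k}) (f e : {set 'I_n}) : bool :=
  (pair_sim R X e < pair_sim R X f)
  || ((pair_sim R X f == pair_sim R X e) && (tb f < tb e)%N).
Definition aux_edges (R : rcfType) n k (tb : {set 'I_n} -> nat)
    (G : attr_graph n k) : {set {set 'I_n}} :=
  [set e in all_pairs n |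
     (#|[set f in all_pairs n | beats R tb (ag_attr G) f e]| < n_aux n)%N].

Definition Q_aux (R : rcfType) n k (tb : {set 'I_n} -> nat)
    (P : {set {set 'I_n}}) (G : attr_graph n k) : R :=
  modularity R (aux_edges R tb G) P.

Definition local_sens (R : realDomainType) n k (q : attr_graph n k -> R)
    (G : attr_graph n k) : R :=
  \big[Num.max/0]_(G' : attr_graph n k | wf_ag G' && nbr_at G G') `|q G - q G'|.

(* The auxiliary graph depends only on the attributes, so toggling an edge does
   not change Q_a.  Its edges are the first m = ceil(n(n-1)/20) pairs of a strict
   total order on pairs, so every auxiliary graph has exactly m edges.  Changing
   the attributes of one vertex v does not change the similarity of any pair
   avoiding v, hence not the relative order of such pairs: either every pair that
   leaves the selection or every pair that enters it contains v, and the two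
   auxiliary graphs differ in t <= n - 1 edges.  For two graphs with m edges each
   differing in t edges, the intra-community edge count moves by at most t and the
   sum of squared community degrees by at most 8mt, so the modularity moves by at
   most 3t/m <= 60/n. *)

From HB Require Import structures.
From mathcomp Require Import all_boot all_order all_algebra zify ring lra.
Set Implicit Arguments. Unset Strict Implicit. Unset Printing Implicit Defensive.
Import Order.TTheory GRing.Theory Num.Theory.

Section Ranking.
Variables (T : finType) (S : {set T}) (lt : rel T).
Hypothesis lt_irr : irreflexive lt.
Hypothesis lt_trans : transitive lt.
Hypothesis lt_total : {in S &, forall e f, e != f -> lt e f || lt f e}.

Definition rank e := #|[set f in S | lt f e]|.

Lemma rank_lt e f : f \in S -> lt f e -> rank f < rank e.
Proof.
move=> fS lt_fe; apply/proper_card/properP; split.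
  by apply/subsetP => g; rewrite !inE => /andP[-> /lt_trans]; apply.
by exists f; rewrite !inE ?fS ?lt_fe ?lt_irr.
Qed.

Lemma lt_of_rank_lt e f : e \in S -> f \in S -> rank e < rank f -> lt e f.
Proof.
move=> eS fS rk_ef; have nef : e != f by apply: contraTneq rk_ef => ->; rewrite ltnn.
case/orP: (lt_total eS fS nef) => // lt_fe.
by have := rank_lt fS lt_fe; rewrite ltnNge (ltnW rk_ef).
Qed.

Lemma rank_inj : {in S &, injective rank}.
Proof.
move=> e f eS fS rk_ef; apply/eqP/negPn/negP => nef.
by case/orP: (lt_total eS fS nef) => [/(rank_lt eS)|/(rank_lt fS)]; rewrite rk_ef ltnn.
Qed.

Lemma rank_lt_card e : e \in S -> rank e < #|S|.
Proof.
move=> eS; apply/proper_card/properP; split.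
  by apply/subsetP => f; rewrite inE => /andP[].
by exists e; rewrite // inE lt_irr andbF.
Qed.

Lemma perm_rank_iota : perm_eq (map rank (enum S)) (iota 0 #|S|).
Proof.
have rk_uniq : uniq (map rank (enum S)).
  by rewrite map_inj_in_uniq ?enum_uniq // => e f; rewrite !mem_enum; apply: rank_inj.
have rk_sub : {subset map rank (enum S) <= iota 0 #|S|}.
  by move=> _ /mapP[e eS ->]; rewrite mem_iota add0n rank_lt_card // -mem_enum.
apply: (uniq_perm rk_uniq (iota_uniq _ _)).
by case: (uniq_min_size rk_uniq rk_sub) => //; rewrite size_map size_iota cardE.
Qed.

Lemma card_rank_lt m : m <= #|S| -> #|[set e in S | rank e < m]| = m.
Proof.
move=> mS; rewrite -sum1dep_card -big_enum_cond /= sum1_count.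
rewrite -(count_map rank (fun i => i < m)) (permP perm_rank_iota).
by rewrite -size_filter (filter_iota_ltn 0) ?size_iota.
Qed.

End Ranking.

Lemma card_set_in_sum (T : finType) (D : {set T}) (p : pred T) :
  #|[set x in D | p x]| = \sum_(x in D) p x.
Proof. by rewrite -sum1dep_card big_mkcondr /=; apply: eq_bigr => x _; case: (p x). Qed.

Lemma double_count (T1 T2 : finType) (A : {set T1}) (B : {set T2}) (r : T1 -> T2 -> bool) :
  \sum_(x in A) #|[set y in B | r x y]| = \sum_(y in B) #|[set x in A | r x y]|.
Proof.
under eq_bigr do rewrite card_set_in_sum.
by rewrite exchange_big; apply: eq_bigr => y _; rewrite card_set_in_sum.
Qed.

Lemma card_setD_sym (T : finType) (A B : {set T}) : #|A| = #|B| -> #|B :\: A| = #|A :\: B|.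
Proof. by move=> cAB; have := cardsID B A; have := cardsID A B; rewrite setIC; lia. Qed.

Lemma sum_degree n (E : {set {set 'I_n}}) :
  E \subset all_pairs n -> \sum_v degree E v = 2 * #|E|.
Proof.
move=> E_pairs; transitivity (\sum_(v in [set: 'I_n]) degree E v).
  by apply: eq_bigl => v; rewrite inE.
rewrite double_count mulnC -sum_nat_const; apply: eq_bigr => e eE.
have := subsetP E_pairs e eE; rewrite inE => /eqP <-.
by apply: eq_card => v; rewrite !inE.
Qed.

Lemma n_aux_le_card_pairs n : n_aux n <= #|all_pairs n|.
Proof. by rewrite /all_pairs card_draws card_ord bin2 /n_aux -divn2; lia. Qed.

Lemma n_aux_gt0 n : 2 <= n -> 0 < n_aux n.
Proof. by move=> n_ge2; rewrite /n_aux divn_gt0 //; nia. Qed.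

Definition pairs_at n (v : 'I_n) := [set e in all_pairs n | v \in e].

Lemma card_pairs_at_le n (v : 'I_n) : #|pairs_at v| <= n - 1.
Proof.
apply: leq_trans (_ : #|[set [set v; u] | u in [set~ v]]| <= _).
  apply/subset_leq_card/subsetP => e; rewrite !inE => /andP[/cards2P[x [y [nxy ->]]]].
  rewrite !inE => /orP[|] /eqP ->; apply/imsetP.
    by exists y; rewrite // !inE eq_sym.
  by exists x; rewrite 1?setUC // !inE.
by apply: leq_trans (leq_imset_card _ _) _; rewrite cardsC1 card_ord subn1.
Qed.

Local Open Scope ring_scope.

Lemma modularity_gap_le (R : realFieldType) (l l' d d' t m : R) :
  0 < m -> `|l - l'| <= t -> `|d - d'| <= 8 * m * t ->
  `|(l / m - d / (2 * m) ^+ 2) - (l' / m - d' / (2 * m) ^+ 2)| <= 3 * t / m.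
Proof.
move=> m_gt0 /ler_normlP[hl1 hl2] /ler_normlP[hd1 hd2].
have m_neq0 : m != 0 by rewrite gt_eqF.
have -> : l / m - d / (2 * m) ^+ 2 - (l' / m - d' / (2 * m) ^+ 2)
    = ((l - l') * (4 * m) - (d - d')) / (4 * m ^+ 2) by field.
have -> : 3 * t / m = 12 * t * m / (4 * m ^+ 2) by field.
have den_gt0 : 0 < 4 * m ^+ 2 by rewrite mulr_gt0 ?exprn_gt0.
rewrite normrM [`|_^-1|]gtr0_norm ?invr_gt0 // ler_pM2r ?invr_gt0 //.
by rewrite ler_norml; apply/andP; split; nra.
Qed.

Section Modularity.
Variables (R : realFieldType) (n : nat) (P : {set {set 'I_n}}).
Hypothesis partP : partition P [set: 'I_n].
Implicit Types (E F : {set {set 'I_n}}) (C : {set 'I_n}).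

Definition intra E C := #|[set e in E | e \subset C]|.
Definition vol E C := (\sum_(v in C) degree E v)%N.

Lemma modularityE E : modularity R E P =
  (\sum_(C in P) intra E C)%N%:R / #|E|%:R
  - (\sum_(C in P) vol E C ^ 2)%N%:R / (2 * #|E|%:R) ^+ 2.
Proof.
rewrite /modularity sumrB; under [X in _ - X]eq_bigr do rewrite expr_div_n -natrX.
by rewrite -!mulr_suml !natr_sum.
Qed.

Lemma sum_vol E : (\sum_(C in P) vol E C = \sum_v degree E v)%N.
Proof. by rewrite -(set_partition_big _ partP); apply: eq_bigl => v; rewrite inE. Qed.

Lemma vol_le E C : E \subset all_pairs n -> C \in P -> (vol E C <= 2 * #|E|)%N.
Proof. by move=> E_pairs CP; rewrite -sum_degree // -sum_vol (bigD1 C) //= leq_addr. Qed.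

Lemma card_blocks_sub_le1 (e : {set 'I_n}) x :
  x \in e -> (#|[set C in P | e \subset C]| <= 1)%N.
Proof.
move=> xe; rewrite -(cards1 (pblock P x)); apply/subset_leq_card/subsetP => C.
rewrite !inE => /andP[CP eC]; apply/eqP/esym/def_pblock => //.
- by case/and3P: partP.
- exact: subsetP eC x xe.
Qed.

Lemma sum_intra_le_card E : E \subset all_pairs n -> (\sum_(C in P) intra E C <= #|E|)%N.
Proof.
move=> E_pairs; rewrite double_count -sum1_card; apply: leq_sum => e eE.
have := subsetP E_pairs e eE; rewrite inE => /eqP e2.
have [x xe] : exists x, x \in e by apply/card_gt0P; rewrite e2.
exact: card_blocks_sub_le1 xe.
Qed.

Lemma sum_intra_leD E F : E \subset all_pairs n ->
  (\sum_(C in P) intra E C <= \sum_(C in P) intra F C + #|E :\: F|)%N.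
Proof.
move=> E_pairs; have D_pairs : E :\: F \subset all_pairs n.
  exact: subset_trans (subsetDl _ _) E_pairs.
apply: leq_trans (leq_add (leqnn _) (sum_intra_le_card D_pairs)).
rewrite -big_split /=; apply: leq_sum => C _; rewrite /intra.
apply: leq_trans (leq_card_setU _ _); apply/subset_leq_card/subsetP => e.
by rewrite !inE; case: (e \in F); case: (e \in E); case: (e \subset C).
Qed.

Lemma vol_split E F C : vol E C = (vol (E :&: F) C + vol (E :\: F) C)%N.
Proof.
rewrite /vol -big_split; apply: eq_bigr => v _; rewrite /degree -(cardsID F).
by congr (_ + _)%N; apply: eq_card => e; rewrite !inE;
  case: (e \in F); case: (e \in E); case: (v \in e).
Qed.

Lemma sum_vol_sq_leD E F : E \subset all_pairs n ->
  (\sum_(C in P) vol E C ^ 2 <= \sum_(C in P) vol F C ^ 2 + 8 * #|E| * #|E :\: F|)%N.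
Proof.
move=> E_pairs; have D_pairs : E :\: F \subset all_pairs n.
  exact: subset_trans (subsetDl _ _) E_pairs.
have -> : (8 * #|E| * #|E :\: F| = \sum_(C in P) 4 * #|E| * vol (E :\: F) C)%N.
  by rewrite -big_distrr /= sum_vol sum_degree // mulnCA !mulnA.
rewrite -big_split /=; apply: leq_sum => C CP.
have := vol_le E_pairs CP; rewrite (vol_split E F C) (vol_split F E C) setIC.
(* (c + r)^2 <= (c + s)^2 + r (2 c + r), and 2 c + r <= 2 vol E C <= 4 #|E| *)
move: (vol _ C) (vol (E :\: F) C) (vol (F :\: E) C) #|E| => c r s m; nia.
Qed.

Lemma modularity_diff_le E F : E \subset all_pairs n -> F \subset all_pairs n ->
  #|E| = #|F| -> (0 < #|E|)%N ->
  `|modularity R E P - modularity R F P| <= 3 * #|E :\: F|%:R / #|E|%:R.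
Proof.
move=> E_pairs F_pairs cEF m_gt0; rewrite !modularityE -cEF.
have cDFE := card_setD_sym cEF.
apply: modularity_gap_le; first by rewrite ltr0n.
- rewrite ler_distl lerBlDr -!natrD !ler_nat sum_intra_leD //.
  by rewrite -cDFE sum_intra_leD.
- rewrite ler_distl lerBlDr -!natrM -!natrD !ler_nat sum_vol_sq_leD //.
  by rewrite -cDFE cEF sum_vol_sq_leD.
Qed.
End Modularity.

Lemma three_mul_div_n_aux_le (R : realFieldType) n t : (2 <= n)%N -> (t <= n - 1)%N ->
  3 * t%:R / (n_aux n)%:R <= 60 / n%:R :> R.
Proof.
move=> n_ge2 t_le; have n_gt0 : 0 < n%:R :> R by rewrite ltr0n; lia.
have m_gt0 : 0 < (n_aux n)%:R :> R by rewrite ltr0n n_aux_gt0.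
rewrite ler_pdivrMr // mulrAC ler_pdivlMr // -!natrM ler_nat.
have : (n * (n - 1) <= 20 * n_aux n)%N by rewrite /n_aux; lia.
nia.
Qed.

Lemma pair_sim_eq_in (R : rcfType) n k (X Y : {ffun 'I_n -> attr_vec k})
    (e : {set 'I_n}) :
  {in e, X =1 Y} -> pair_sim R X e = pair_sim R Y e.
Proof.
rewrite /pair_sim => XY.
have : {in enum e, X =1 Y} by move=> u; rewrite mem_enum; apply: XY.
by case: (enum e) => [|u [|w [|? ?]]] //= XY'; rewrite !XY' ?inE ?eqxx ?orbT.
Qed.

Section AuxGraph.
Variables (R : rcfType) (n k : nat) (tb : {set 'I_n} -> nat).
Hypothesis tb_inj : {in all_pairs n &, injective tb}.
Implicit Types (X : {ffun 'I_n -> attr_vec k}) (G : attr_graph n k).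

Lemma beats_irr X : irreflexive (beats R tb X).
Proof. by move=> e; rewrite /beats ltxx eqxx ltnn. Qed.

Lemma beats_trans X : transitive (beats R tb X).
Proof.
move=> f e g; rewrite /beats => /orP[h1|/andP[/eqP h1 h2]] /orP[h3|/andP[/eqP h3 h4]].
- by rewrite (lt_trans h3 h1).
- by rewrite -h3 h1.
- by rewrite h1 h3.
- by rewrite h1 h3 eqxx (ltn_trans h2 h4) orbT.
Qed.

Lemma beats_total X :
  {in all_pairs n &, forall e f, e != f -> beats R tb X e f || beats R tb X f e}.
Proof.
move=> e f eS fS nef; rewrite /beats.
case: (ltgtP (pair_sim R X e) (pair_sim R X f)) => //= _.
by rewrite -neq_ltn; apply: contra nef => /eqP /tb_inj ->.
Qed.

Lemma card_aux_edges G : #|aux_edges R tb G| = n_aux n.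
Proof.
exact: (card_rank_lt (@beats_irr _) (@beats_trans _) (@beats_total _)
  (n_aux_le_card_pairs n)).
Qed.

Lemma aux_edges_sub G : aux_edges R tb G \subset all_pairs n.
Proof. by apply/subsetP => e; rewrite inE => /andP[]. Qed.

Lemma mem_aux_edges G e : (e \in aux_edges R tb G) =
  (e \in all_pairs n) && (rank (all_pairs n) (beats R tb (ag_attr G)) e < n_aux n)%N.
Proof. by rewrite /aux_edges inE. Qed.

(* A pair avoiding v that enters the top list and one that leaves it would swap
   their relative order, although neither similarity has changed. *)
Lemma aux_edges_setD_sub G G' v : {in [set~ v], ag_attr G =1 ag_attr G'} ->
  (aux_edges R tb G :\: aux_edges R tb G' \subset pairs_at v)
  || (aux_edges R tb G' :\: aux_edges R tb G \subset pairs_at v).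
Proof.
move=> XY; have [//|/subsetPn[e eD eV]] := boolP (_ :\: _ \subset _).
apply/subsetP => f fD; apply/negPn/negP => fV.
move: eD fD; rewrite !in_setD !mem_aux_edges.
move=> /andP[eG' /andP[eS eG]] /andP[fG /andP[fS fG']].
rewrite eS -leqNgt in eG'; rewrite fS -leqNgt in fG.
have beats_of_rank X := lt_of_rank_lt (@beats_irr X) (@beats_trans X) (@beats_total X).
have beats_ef := beats_of_rank (ag_attr G) e f eS fS (leq_trans eG fG).
have beats_fe' := beats_of_rank (ag_attr G') f e fS eS (leq_trans fG' eG').
have sim_eq g : g \in all_pairs n -> g \notin pairs_at v ->
    pair_sim R (ag_attr G) g = pair_sim R (ag_attr G') g.
  move=> gS; rewrite inE gS => vg; apply: pair_sim_eq_in => u ug.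
  by apply: XY; rewrite !inE; apply: contraNneq vg => <-.
have beats_fe : beats R tb (ag_attr G) f e by rewrite /beats !sim_eq.
by have := beats_trans beats_ef beats_fe; rewrite beats_irr.
Qed.

Lemma card_aux_edges_setD_le G G' v : {in [set~ v], ag_attr G =1 ag_attr G'} ->
  (#|aux_edges R tb G :\: aux_edges R tb G'| <= n - 1)%N.
Proof.
move=> XY; apply: leq_trans (card_pairs_at_le v).
have cE : #|aux_edges R tb G| = #|aux_edges R tb G'| by rewrite !card_aux_edges.
by case/orP: (aux_edges_setD_sub XY) => /subset_leq_card //; rewrite card_setD_sym.
Qed.

Lemma Q_aux_attr_change_le P G G' v : (2 <= n)%N -> partition P [set: 'I_n] ->
  {in [set~ v], ag_attr G =1 ag_attr G'} ->
  `|Q_aux R tb P G - Q_aux R tb P G'| <= 60 / n%:R.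
Proof.
move=> n_ge2 partP XY; rewrite /Q_aux.
have cE : #|aux_edges R tb G| = #|aux_edges R tb G'| by rewrite !card_aux_edges.
apply: le_trans (modularity_diff_le R partP (aux_edges_sub G) (aux_edges_sub G') cE _) _.
  by rewrite card_aux_edges n_aux_gt0.
by rewrite card_aux_edges; apply: three_mul_div_n_aux_le (card_aux_edges_setD_le XY).
Qed.

End AuxGraph.

Theorem proposition1 (R : rcfType) (n k : nat) (tb : {set 'I_n} -> nat)
    (P : {set {set 'I_n}}) (G : attr_graph n k) :
  (2 <= n)%N ->
  {in all_pairs n &, injective tb} ->
  partition P [set: 'I_n] ->
  wf_ag G ->
  local_sens (Q_aux R tb P) G <= 60 / n%:R.
Proof.
move=> n_ge2 tb_inj partP _.
apply: (big_ind (fun x => x <= 60 / n%:R)) => [||G' /andP[_ nbr]].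
- by rewrite divr_ge0 ?ler0n.
- by move=> x y hx hy; rewrite ge_max hx hy.
case/orP: nbr => [/andP[_ /eqP sameX] | /andP[_ /cards1P[v diffX]]].
  by rewrite /Q_aux /aux_edges sameX subrr normr0 divr_ge0 ?ler0n.
apply: (Q_aux_attr_change_le _ tb_inj (v := v) n_ge2 partP) => u; rewrite !inE => uv.
apply/eqP; apply: contraNT uv => XYu.
by rewrite -in_set1 -diffX inE.
Qed.
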